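(* Let $b\ge2$ be an integer, $\gamma\in(0,1)$, and let $\phi$ be a $\mathbb{Z}$-periodic Lipschitz function satisfying condition (H). Then for every $x\in[0,1]$ the measure $m_x$ has no atoms.
   Context: $\Lambda=\{0,\dots,b-1\}$, $\Sigma=\Lambda^{\mathbb{Z}_+}$, $\nu$ uniform on $\Lambda$. $S(x,\mathbf{j})=\sum_{n\ge1}\gamma^{n-1}\phi\big(\frac{x+j_1+j_2b+\cdots+j_nb^{n-1}}{b^n}\big)$ for $\mathbf{j}\in\Sigma$, $x\in[0,1]$. Condition (H): for all $\mathbf{i}\neq\mathbf{j}\in\Sigma$, $x\mapsto S(x,\mathbf{j})-S(x,\mathbf{i})$ is not identically zero on $[0,1]$. $m_x$ is the image of $\nu^{\mathbb{Z}_+}$ under $\mathbf{j}\mapsto S(x,\mathbf{j})$. *)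

From HB Require Import structures.
From mathcomp Require Import all_boot all_order all_algebra.
From mathcomp Require Import all_classical all_reals all_analysis.
Set Implicit Arguments. Unset Strict Implicit. Unset Printing Implicit Defensive.
Import Order.TTheory GRing.Theory Num.Theory.
Import numFieldNormedType.Exports.
Local Open Scope classical_set_scope.
Local Open Scope ring_scope.

(* Sigma = Lambda^{Z_+}, Lambda = {0,...,b-1}; a sequence j_1 j_2 ... is
   encoded as j : nat -> 'I_b with j_k = j (k-1). *)
Definition seqspace (b : nat) := nat -> 'I_b.

Definition cylinder (b n : nat) (w : 'I_n -> 'I_b) : set (seqspace b) :=
  [set j | forall k : 'I_n, j (nat_of_ord k) = w k].

Definition cylinders (b : nat) : set (set (seqspace b)) :=
  [set C | exists n (w : 'I_n -> 'I_b), C = cylinder w].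

HB.instance Definition _ (c : nat) := isPointed.Build 'I_c.+2 ord0.

(* g_sigma_algebraType needs a pointed carrier, so Sigma is only formed for
   alphabets 'I_b with b >= 2 given as b = c.+2. *)
Notation Sigma c := (g_sigma_algebraType (@cylinders c.+2)).

(* The infinite product measure nu^{Z_+} of the uniform measure on Lambda:
   a probability measure giving mass b^{-n} to every cylinder of length n.
   (By the pi-lambda theorem it is the unique such measure.) *)
Definition is_uniform_product (R : realType) (c : nat)
  (P : probability (Sigma c) R) : Prop :=
  forall (n : nat) (w : 'I_n -> 'I_c.+2),
    P (cylinder w) = ((c.+2%:R ^- n : R)%:E).

Definition S_term (R : realType) (b : nat) (gamma : R) (phi : R -> R)
  (x : R) (j : seqspace b) (n : nat) : R :=
  gamma ^+ n.-1 *
  phi ((x + \sum_(1 <= k < n.+1) (j k.-1)%:R * b%:R ^+ k.-1) / b%:R ^+ n).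

Arguments S_term {R} b gamma phi x j n.

Definition S (R : realType) (b : nat) (gamma : R) (phi : R -> R)
  (x : R) (j : seqspace b) : R :=
  limn (fun N : nat => \sum_(1 <= n < N) S_term b gamma phi x j n).

Arguments S {R} b gamma phi x j.

Definition periodic1 (R : realType) (phi : R -> R) : Prop :=
  forall u, phi (u + 1) = phi u.

Definition condH (R : realType) (b : nat) (gamma : R) (phi : R -> R) : Prop :=
  forall i j : seqspace b, i <> j ->
    exists2 x : R, 0 <= x <= 1 & S b gamma phi x j - S b gamma phi x i != 0.

Arguments condH {R} b gamma phi.

Definition m_x (R : realType) (c : nat) (gamma : R) (phi : R -> R)
  (P : probability (Sigma c) R) (x : R) : set R -> \bar R :=
  pushforward P (fun j : Sigma c => S c.+2 gamma phi x j).

Arguments m_x {R} c gamma phi P x.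

From HB Require Import structures.
From mathcomp Require Import all_boot all_order all_algebra.
From mathcomp Require Import all_classical all_reals all_analysis.
From mathcomp Require Import ring lra zify.
Import Order.TTheory GRing.Theory Num.Theory.
Import numFieldNormedType.Exports.
Local Open Scope classical_set_scope.
Local Open Scope ring_scope.

(* If the level set A = {j | S(x, j) = y} had positive mass then, A being
   closed in the product topology, Lebesgue density along cylinders gives for
   every k a cylinder [w] in which A misses at most a proportion
   2^-(k+2) b^-2k.  As P is a product measure, all but a mass 2^-(k+2) of the
   tails t then satisfy w v t \in A for every word v of length k, so this holds
   for all k at once on a set of positive mass, which contains two distinct
   tails i and j.  Since S(x, w v t) = S_|wv|(x, w v) + gamma^|wv| S(x_wv, t),
   we get S(x_wv, i) = S(x_wv, j) at the branch points x_wv, which for v of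
   length k form a b^-k-net of [0, 1].  As S(., t) is Lipschitz uniformly in t,
   S(., i) = S(., j) on [0, 1], contradicting (H). *)

Section Words.
Context {b : nat}.
Implicit Types (i j u t : nat -> 'I_b).

Definition prefix_val n j : nat := \sum_(k < n) j k * b ^ k.

Definition sdrop L j : nat -> 'I_b := fun k => j (k + L)%N.

Definition scat L u t : nat -> 'I_b :=
  fun k => if (k < L)%N then u k else t (k - L)%N.

Lemma prefix_val_lt n j : (prefix_val n j < b ^ n)%N.
Proof.
elim: n => [|n IH]; first by rewrite /prefix_val big_ord0 expn0.
rewrite /prefix_val big_ord_recr /= -/(prefix_val n j) expnS.
have := ltn_ord (j n); move: IH.
set q := (b ^ n)%N; set v := prefix_val n j; set d := nat_of_ord (j n).
by nia.
Qed.

Lemma eq_prefix_val n i j :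
  (forall k, (k < n)%N -> i k = j k) -> prefix_val n i = prefix_val n j.
Proof. by move=> eq_ij; apply: eq_bigr => k _; rewrite eq_ij. Qed.

Lemma prefix_valD L n j :
  prefix_val (L + n) j = (prefix_val L j + b ^ L * prefix_val n (sdrop L j))%N.
Proof.
rewrite /prefix_val big_split_ord /=; congr (_ + _)%N.
rewrite big_distrr /=; apply: eq_bigr => k _.
by rewrite /sdrop expnD addnC mulnCA.
Qed.

Lemma scat_lt L u t k : (k < L)%N -> scat L u t k = u k.
Proof. by rewrite /scat => ->. Qed.

Lemma sdrop_scat L u t : sdrop L (scat L u t) = t.
Proof. by apply/funext => k; rewrite /sdrop /scat ltnNge leq_addl /= addnK. Qed.

Lemma prefix_val_onto k m : (0 < b)%N -> (m < b ^ k)%N ->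
  exists j, prefix_val k j = m.
Proof.
move=> b_gt0; elim: k m => [|k IH] m.
  rewrite expn0 ltnS leqn0 => /eqP ->.
  by exists (fun _ => Ordinal b_gt0); rewrite /prefix_val big_ord0.
move=> m_lt; have [j val_j] : exists j, prefix_val k j = (m %/ b)%N.
  by apply: IH; rewrite ltn_divLR // -expnSr.
pose j' n := if n is n'.+1 then j n' else Ordinal (ltn_pmod m b_gt0).
exists j'; rewrite -add1n prefix_valD.
have -> : sdrop 1 j' = j by apply/funext => n; rewrite /sdrop addn1.
by rewrite val_j /prefix_val big_ord1 /= muln1 expn1 mulnC addnC -divn_eq.
Qed.

End Words.

Lemma nat_near {R : realType} n (r : R) :
  -1 <= r <= n.+1%:R -> exists2 m : nat, (m <= n)%N & `|r - m%:R| <= 1.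
Proof.
elim: n r => [|n IH] r /andP[r_ge r_le].
  by exists 0%N => //; rewrite subr0 ler_norml r_ge.
have [r_le'|r_gt] := lerP r n.+1%:R.
  have r_itv : -1 <= r <= n.+1%:R by rewrite r_ge.
  by have [m m_le near_m] := IH r r_itv; exists m => //; exact: leqW.
exists n.+1 => //; rewrite -natr1 in r_le; rewrite ler_norml; apply/andP; lra.
Qed.

Section Branches.
Context {R : realType} {b : nat}.
Hypothesis b_gt0 : (0 < b)%N.
Implicit Types (x : R) (i j : nat -> 'I_b).

(* An inverse branch of u |-> b^n u mod 1, indexed by the first n digits of j. *)
Definition branch x n j : R := (x + (prefix_val n j)%:R) / b%:R ^+ n.

Let bX_gt0 n : 0 < (b%:R : R) ^+ n.
Proof. by rewrite exprn_gt0 // ltr0n. Qed.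

Lemma branchD x L n j :
  branch x (L + n) j = branch (branch x L j) n (sdrop L j).
Proof.
rewrite /branch prefix_valD natrD natrM natrX exprD.
by field; rewrite !gt_eqF.
Qed.

Lemma eq_branch x n i j :
  (forall k, (k < n)%N -> i k = j k) -> branch x n i = branch x n j.
Proof. by rewrite /branch => /eq_prefix_val ->. Qed.

Lemma branchB x x' n j : branch x n j - branch x' n j = (x - x') / b%:R ^+ n.
Proof. by rewrite /branch -mulrBl; congr (_ / _); ring. Qed.

Lemma branch_itv x n j : 0 <= x <= 1 -> 0 <= branch x n j <= 1.
Proof.
move=> /andP[x_ge0 x_le1]; rewrite /branch.
have val_lt : ((prefix_val n j)%:R : R) + 1 <= b%:R ^+ n.
  by rewrite -natrX natr1 ler_nat prefix_val_lt.
apply/andP; split; first by rewrite divr_ge0 ?addr_ge0 // ltW.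
rewrite ler_pdivrMr // mul1r; lra.
Qed.

Lemma branch_dense z x k : 0 <= z <= 1 -> 0 <= x <= 1 ->
  exists j, `|z - branch x k j| <= b%:R ^- k.
Proof.
move=> /andP[z_ge0 z_le1] /andP[x_ge0 x_le1].
have bk_gt0 := bX_gt0 k.
have r_itv : -1 <= z * b%:R ^+ k - x <= (b ^ k).-1.+1%:R.
  rewrite prednK ?expn_gt0 ?b_gt0 // natrX.
  have : z * b%:R ^+ k <= b%:R ^+ k by rewrite ler_piMl // ltW.
  have : 0 <= z * b%:R ^+ k by rewrite mulr_ge0 // ltW.
  by move=> *; apply/andP; lra.
move: r_itv => /nat_near[m m_le near_m].
have [j val_j] : exists j, prefix_val k j = m.
  by apply: prefix_val_onto => //; rewrite -ltnS prednK ?expn_gt0 ?b_gt0 in m_le.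
exists j; rewrite /branch val_j.
have -> : z - (x + m%:R) / b%:R ^+ k = (z * b%:R ^+ k - x - m%:R) / b%:R ^+ k.
  by field; rewrite gt_eqF.
rewrite normrM normfV (gtr0_norm bk_gt0) -[X in _ <= X]mul1r.
by rewrite ler_wpM2r // invr_ge0 ltW.
Qed.

End Branches.

Lemma cvgn_norm_le (R : realType) (u : R ^nat) l K :
  u @ \oo --> l -> (forall n, `|u n| <= K) -> `|l| <= K.
Proof.
move=> u_l u_le; have norm_u_l : (fun n => `|u n|) @ \oo --> `|l| by apply: cvg_norm.
rewrite -(cvg_lim (@Rhausdorff R) norm_u_l); apply: limr_le.
  by apply/cvg_ex; exists `|l|.
by near=> n; exact: u_le.
Unshelve. all: by end_near.
Qed.

Section Series.
Context {R : realType} {b : nat} {gamma : R} {phi : R -> R} {M : R}.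
Hypothesis b_gt0 : (0 < b)%N.
Hypothesis gamma_gt0 : 0 < gamma.
Hypothesis gamma_lt1 : gamma < 1.
Hypothesis M_ge0 : 0 <= M.
Hypothesis phi_lip : forall u v, `|phi u - phi v| <= M * `|u - v|.
Implicit Types (x : R) (i j u t : nat -> 'I_b).

Local Notation S_term := (S_term b gamma phi).
Local Notation S := (S b gamma phi).

Definition S_partial x j N := \sum_(1 <= n < N) S_term x j n.

Definition phi_sup := `|phi 0| + M.

Definition S_sup := phi_sup / (1 - gamma).

Let gammaX_ge0 n : 0 <= gamma ^+ n.
Proof. by rewrite exprn_ge0 // ltW. Qed.

Lemma S_termE x j n : S_term x j n = gamma ^+ n.-1 * phi (branch x n j).
Proof.
rewrite /S_term /branch /prefix_val; congr (_ * phi ((x + _) / _)).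
rewrite big_add1 /= big_mkord natr_sum; apply: eq_bigr => k _.
by rewrite natrM natrX.
Qed.

Lemma S_termD x j L n : (0 < n)%N ->
  S_term x j (L + n) = gamma ^+ L * S_term (branch x L j) (sdrop L j) n.
Proof.
case: n => // n _.
by rewrite !S_termE branchD // addnS /= exprD mulrA.
Qed.

Lemma S_partialD x j L m : S_partial x j (L + m).+1 =
  S_partial x j L.+1 + gamma ^+ L * S_partial (branch x L j) (sdrop L j) m.+1.
Proof.
rewrite /S_partial (big_cat_nat _ (n := L.+1)) //=; last by rewrite ltnS leq_addr.
congr (_ + _); rewrite -{1}(add1n L) big_addn big_distrr /=.
have -> : ((L + m).+1 - L = m.+1)%N by rewrite -addnS addKn.
by apply: eq_big_nat => n /andP[n_gt0 _]; rewrite addnC S_termD.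
Qed.

Lemma eq_S_partial x i j L : (forall k, (k < L)%N -> i k = j k) ->
  S_partial x i L.+1 = S_partial x j L.+1.
Proof.
move=> eq_ij; apply: eq_big_nat => n /andP[_ n_le]; rewrite !S_termE.
by congr (_ * phi _); apply: eq_branch => k k_lt; apply: eq_ij; exact: leq_trans k_lt n_le.
Qed.

Lemma norm_phi_le z : 0 <= z <= 1 -> `|phi z| <= phi_sup.
Proof.
move=> /andP[z_ge0 z_le1]; have := phi_lip z 0.
rewrite subr0 (ger0_norm z_ge0) /phi_sup => lip_z.
have : M * z <= M by rewrite ler_piMr.
have := ler_normD (phi z - phi 0) (phi 0); rewrite subrK.
lra.
Qed.

Lemma sum_geometric_le N : \sum_(1 <= n < N) gamma ^+ n.-1 <= (1 - gamma)^-1.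
Proof.
have := @geometric_le_lim R N.-1 1 gamma ler01 gamma_gt0.
rewrite gtr0_norm // div1r => /(_ gamma_lt1); apply: le_trans.
by rewrite big_add1 /= /series /=; under [X in _ <= X]eq_bigr do rewrite mul1r.
Qed.

Lemma norm_S_term_le x j n : 0 <= x <= 1 ->
  `|S_term x j n| <= phi_sup * gamma ^+ n.-1.
Proof.
move=> x_itv; rewrite S_termE normrM (ger0_norm (gammaX_ge0 _)) mulrC.
by rewrite ler_wpM2r // norm_phi_le // branch_itv.
Qed.

Lemma sum_norm_S_term_le x j N : 0 <= x <= 1 ->
  \sum_(1 <= n < N) `|S_term x j n| <= S_sup.
Proof.
move=> x_itv.
apply: (@le_trans _ _ (\sum_(1 <= n < N) phi_sup * gamma ^+ n.-1)).
  by apply: ler_sum => n _; apply: norm_S_term_le.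
by rewrite -big_distrr /= ler_wpM2l ?sum_geometric_le ?addr_ge0.
Qed.

Lemma S_partial_cvg x j : 0 <= x <= 1 -> S_partial x j @ \oo --> S x j.
Proof.
move=> x_itv; pose s := series (fun k => S_term x j k.+1).
have s_cvg : cvgn s.
  apply: normed_cvg; apply: (@series_le_cvg _ _ (geometric phi_sup gamma)) => //.
  - by move=> k; exact: normr_ge0.
  - by move=> k; rewrite /geometric mulr_ge0 ?addr_ge0.
  - by move=> k; exact: norm_S_term_le.
  - by apply: is_cvg_geometric_series; rewrite gtr0_norm.
have : S_partial x j @ \oo --> limn s.
  rewrite -cvg_shiftS (_ : [sequence _]_n = s) //.
  by apply/funext => N; rewrite /s /series /= /S_partial big_add1.
by move=> S_partial_s; apply/cvg_ex; exists (limn s).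
Qed.

Lemma S_split x j L : 0 <= x <= 1 ->
  S x j = S_partial x j L.+1 + gamma ^+ L * S (branch x L j) (sdrop L j).
Proof.
move=> x_itv; pose s m := S_partial x j (L + m).+1.
have s_S : s @ \oo --> S x j.
  rewrite (_ : s = [sequence S_partial x j (m + L.+1)]_m).
    by rewrite cvg_shiftn; exact: S_partial_cvg.
  by apply/funext => m /=; rewrite /s addnS addnC.
have s_split : s @ \oo -->
    S_partial x j L.+1 + gamma ^+ L * S (branch x L j) (sdrop L j).
  rewrite (_ : s = fun m => S_partial x j L.+1 +
      gamma ^+ L * S_partial (branch x L j) (sdrop L j) m.+1).
    apply: cvgD; first exact: cvg_cst.
    apply: cvgMr.
    have := S_partial_cvg _ (sdrop L j) (branch_itv b_gt0 x L j x_itv).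
    by rewrite -cvg_shiftS.
  by apply/funext => m; rewrite /s S_partialD.
exact: (cvg_unique _ s_S s_split).
Qed.

Lemma norm_S_le x j : 0 <= x <= 1 -> `|S x j| <= S_sup.
Proof.
move=> x_itv; apply: cvgn_norm_le (S_partial_cvg x j x_itv) _ => N.
exact: le_trans (ler_norm_sum _ _ _) (sum_norm_S_term_le x j N x_itv).
Qed.

Lemma S_lipschitz x x' j : 0 <= x <= 1 -> 0 <= x' <= 1 ->
  `|S x j - S x' j| <= M / (1 - gamma) * `|x - x'|.
Proof.
move=> x_itv x'_itv.
have term_lip n : `|S_term x j n - S_term x' j n| <= M * `|x - x'| * gamma ^+ n.-1.
  rewrite !S_termE -mulrBr normrM (ger0_norm (gammaX_ge0 _)) mulrC ler_wpM2r //.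
  apply: le_trans (phi_lip _ _) _; rewrite branchB normrM ler_wpM2l //.
  have bn_ge1 : 1 <= (b%:R : R) ^+ n by rewrite exprn_ege1 // ler1n.
  rewrite normfV [`|_ ^+ n|]ger0_norm; last exact: le_trans ler01 bn_ge1.
  by rewrite ler_piMr // invf_le1 // (lt_le_trans ltr01 bn_ge1).
apply: (@cvgn_norm_le _ (fun N => S_partial x j N - S_partial x' j N)).
  exact: cvgB (S_partial_cvg x j x_itv) (S_partial_cvg x' j x'_itv).
move=> N; rewrite /S_partial -sumrB; apply: le_trans (ler_norm_sum _ _ _) _.
apply: le_trans (ler_sum _ (fun n _ => term_lip n)) _.
by rewrite -big_distrr /= mulrAC ler_wpM2r // ler_wpM2l // sum_geometric_le.
Qed.

Lemma S_prefix_close x i j L : 0 <= x <= 1 ->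
  (forall k, (k < L)%N -> i k = j k) ->
  `|S x i - S x j| <= 2 * S_sup * gamma ^+ L.
Proof.
move=> x_itv eq_ij; rewrite (S_split _ i L x_itv) (S_split _ j L x_itv).
rewrite (eq_S_partial _ _ _ _ eq_ij) (eq_branch _ _ _ _ eq_ij).
rewrite opprD addrACA subrr add0r -mulrBr normrM.
rewrite (ger0_norm (gammaX_ge0 _)) mulrC ler_wpM2r //.
apply: le_trans (ler_normB _ _) _.
have branch_j := branch_itv b_gt0 x L j x_itv.
by have := norm_S_le _ (sdrop L i) branch_j; have := norm_S_le _ (sdrop L j) branch_j; lra.
Qed.

Lemma S_scat x L u t : 0 <= x <= 1 ->
  S x (scat L u t) = S_partial x u L.+1 + gamma ^+ L * S (branch x L u) t.
Proof.
move=> x_itv; have eq_u k : (k < L)%N -> scat L u t k = u k by exact: scat_lt.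
rewrite (S_split _ _ L x_itv) sdrop_scat.
by rewrite (eq_S_partial _ _ _ _ eq_u) (eq_branch _ _ _ _ eq_u).
Qed.

Lemma S_scat_eq x L u i j : 0 <= x <= 1 ->
  S x (scat L u i) = S x (scat L u j) -> S (branch x L u) i = S (branch x L u) j.
Proof.
move=> x_itv; rewrite !S_scat // => /addrI /mulfI; apply.
by rewrite expf_neq0 // gt_eqF.
Qed.

End Series.

Arguments S_sup {R} gamma phi M.

Section Cylinders.
Context {c : nat}.
Local Notation b := c.+2.
Local Notation T := (Sigma c).
Implicit Types (f j u : nat -> 'I_b) (A : set T).

Definition prefix_set n f : set T := [set j | forall k, (k < n)%N -> j k = f k].

Definition word_seq {n} (w : 'I_n -> 'I_b) : nat -> 'I_b :=
  fun k => if insub k is Some i then w i else ord0.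

(* Adding set0 makes the cylinders a pi-system. *)
Definition cylinders0 : set (set T) := [set C | cylinders C \/ C = set0].

Lemma word_seq_lt {n} (w : 'I_n -> 'I_b) k (k_lt : (k < n)%N) :
  word_seq w k = w (Ordinal k_lt).
Proof. by rewrite /word_seq insubT. Qed.

Lemma prefix_set_cylinder n f : prefix_set n f = cylinder (fun k : 'I_n => f k).
Proof.
apply/seteqP; split => j /= j_f; first by move=> k; apply: j_f.
by move=> k k_lt; apply: (j_f (Ordinal k_lt)).
Qed.

Lemma cylinder_prefix_set n (w : 'I_n -> 'I_b) : cylinder w = prefix_set n (word_seq w).
Proof.
rewrite prefix_set_cylinder; congr cylinder; apply/funext => k.
by rewrite (word_seq_lt w k (ltn_ord k)); congr w; apply: val_inj.
Qed.

Lemma cylinders0_prefix_set n f : cylinders0 (prefix_set n f).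
Proof. by left; rewrite prefix_set_cylinder; exists n, (fun k : 'I_n => f k). Qed.

Lemma measurable_prefix_set n f : measurable (prefix_set n f).
Proof. by rewrite prefix_set_cylinder; apply: sub_gen_smallest; exists n, (fun k => f k). Qed.

Lemma measurable_cylinders0 : @measurable _ T = <<s cylinders0 >>.
Proof.
apply/seteqP; split.
  apply: smallest_sub; first exact: smallest_sigma_algebra.
  by move=> C C_cyl; apply: sub_gen_smallest; left.
apply: smallest_sub; first exact: sigma_algebra_measurable.
by move=> C [C_cyl|->]; [exact: sub_gen_smallest | exact: measurable0].
Qed.

Lemma prefix_setI n m f u : (forall k, (k < n)%N -> (k < m)%N -> f k = u k) ->
  prefix_set n f `&` prefix_set m u =
  prefix_set (maxn n m) (fun k => if (k < n)%N then f k else u k).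
Proof.
move=> eq_fu; apply/seteqP; split => j /=.
  move=> [j_f j_u] k; rewrite leq_max; case: ifP => [k_n _|_ /= k_m].
    exact: j_f.
  exact: j_u.
move=> j_fu; split => k k_lt.
  by have := j_fu k; rewrite leq_max k_lt => /(_ isT).
have := j_fu k; rewrite leq_max k_lt orbT => /(_ isT) ->.
by case: ifP => // k_n; exact: eq_fu.
Qed.

Lemma prefix_setI_eq0 n m f u : ~ (forall k, (k < n)%N -> (k < m)%N -> f k = u k) ->
  prefix_set n f `&` prefix_set m u = set0.
Proof.
move=> neq_fu; apply/seteqP; split => // j [j_f j_u]; apply: neq_fu => k k_n k_m.
by rewrite -j_f // -j_u.
Qed.

Lemma cylinders0_setI_closed : setI_closed cylinders0.
Proof.
move=> _ _ [[n [w ->]]|->] [[m [v ->]]|->]; rewrite ?set0I ?setI0; try by right.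
rewrite !cylinder_prefix_set.
have [eq_wv|neq_wv] := pselect (forall k, (k < n)%N -> (k < m)%N -> word_seq w k = word_seq v k).
  by rewrite prefix_setI //; exact: cylinders0_prefix_set.
by rewrite prefix_setI_eq0 //; right.
Qed.

Lemma cylinders0_setT : cylinders0 [set: T].
Proof.
have -> : [set: T] = prefix_set 0 (fun _ => ord0) by apply/seteqP; split.
exact: cylinders0_prefix_set.
Qed.

Lemma measurable_prefix_dep N A :
  (forall i j, (forall k, (k < N)%N -> i k = j k) -> A i -> A j) -> measurable A.
Proof.
move=> A_dep.
pose W := [set w : {ffun 'I_N -> 'I_b} | exists2 j, A j & forall k : 'I_N, j k = w k].
have -> : A = \bigcup_(w in W) prefix_set N (word_seq w).
  apply/seteqP; split => j.
    move=> Aj; exists [ffun k : 'I_N => j k]; first by exists j => // k; rewrite ffunE.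
    by move=> k k_lt /=; rewrite word_seq_lt ffunE.
  move=> [w [j' Aj' j'_w] j_w]; apply: (A_dep j') => // k k_lt.
  by rewrite j_w // word_seq_lt -j'_w.
apply: fin_bigcup_measurable; first exact: finite_finset.
by move=> w _; exact: measurable_prefix_set.
Qed.

Lemma scat_preimage_prefix_set L u n f :
  (forall k, (k < n)%N -> (k < L)%N -> u k = f k) ->
  scat L u @^-1` prefix_set n f = prefix_set (n - L) (fun k => f (k + L)%N).
Proof.
move=> eq_uf; apply/seteqP; split => t /= t_f k k_lt.
  have := t_f (k + L)%N; rewrite /scat [(k + L < L)%N]ltnNge leq_addl /= addnK.
  by apply; lia.
rewrite /scat; case: ifP => [k_L|/negbT]; first by rewrite eq_uf.
by rewrite -leqNgt => L_k; have := t_f (k - L)%N; rewrite subnK //; apply; lia.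
Qed.

Lemma scat_preimage_prefix_set_eq0 L u n f :
  ~ (forall k, (k < n)%N -> (k < L)%N -> u k = f k) ->
  scat L u @^-1` prefix_set n f = set0.
Proof.
move=> neq_uf; apply/seteqP; split => // t t_f; apply: neq_uf => k k_n k_L.
by have := t_f k k_n; rewrite /scat k_L.
Qed.

Lemma measurable_scat L u : measurable_fun [set: T] (scat L u : T -> T).
Proof.
apply: (@measurability _ _ T T setT (scat L u) (@cylinders b)) => //.
move=> _ [_ [n [w ->]] <-]; rewrite setTI cylinder_prefix_set.
have [eq_uw|neq_uw] := pselect (forall k, (k < n)%N -> (k < L)%N -> u k = word_seq w k).
  by rewrite scat_preimage_prefix_set //; exact: measurable_prefix_set.
by rewrite scat_preimage_prefix_set_eq0.
Qed.

Definition prefix_nbhd N A : set T :=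
  [set j | exists2 j', A j' & forall k, (k < N)%N -> j k = j' k].

Definition seq_closed A := forall j, (forall N, prefix_nbhd N A j) -> A j.

Lemma measurable_prefix_nbhd N A : measurable (prefix_nbhd N A).
Proof.
apply: (measurable_prefix_dep N) => i j eq_ij [j' Aj' i_j'].
by exists j' => // k k_lt; rewrite -eq_ij // i_j'.
Qed.

Lemma seq_closedE A : seq_closed A -> A = \bigcap_N prefix_nbhd N A.
Proof.
move=> A_closed; apply/seteqP; split => [j Aj N _|j j_nbhd]; first by exists j.
by apply: A_closed => N; exact: j_nbhd.
Qed.

Lemma measurable_seq_closed A : seq_closed A -> measurable A.
Proof.
move=> /seq_closedE ->; apply: bigcapT_measurable => N.
exact: measurable_prefix_nbhd.
Qed.

End Cylinders.

Lemma norm_le_geometric_eq0 (R : realType) (a C q : R) :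
  `|q| < 1 -> (forall n, `|a| <= C * q ^+ n) -> a = 0.
Proof.
move=> q_lt1 a_le.
have Cq_0 : (fun n => C * q ^+ n) @ \oo --> 0.
  by rewrite -(mulr0 C); apply: cvgMr; exact: cvg_expr.
have : `|a| <= 0.
  rewrite -(cvg_lim (@Rhausdorff R) Cq_0); apply: limr_ge.
    by apply/cvg_ex; exists 0.
  by near=> n; exact: a_le.
by rewrite normr_le0 => /eqP.
Unshelve. all: by end_near.
Qed.

Lemma measure_bigcup_fintype_le {d} {T : measurableType d} {R : realType}
    (mu : {measure set T -> \bar R}) (V : finType) (F : V -> set T) (e : R) :
  0 <= e -> (forall v, measurable (F v)) -> (forall v, (mu (F v) <= e%:E)%E) ->
  (mu (\bigcup_(v in [set: V]) F v) <= (#|V|%:R * e)%:E)%E.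
Proof.
move=> e_ge0 mF mu_F_le.
pose G k : set T := if insub k is Some i then F (enum_val (i : 'I_#|V|)) else set0.
have mG k : measurable (G k) by rewrite /G; case: insub.
apply: (@le_trans _ _ (\sum_(k < #|V|) mu (G k))%E).
  apply: content_subadditive => //.
    by apply: fin_bigcup_measurable => // v _; exact: mF.
  move=> j [v _ Fvj]; rewrite -bigcup_mkord; exists (enum_rank v) => //=.
  by rewrite /G valK enum_rankK.
apply: (@le_trans _ _ (\sum_(k < #|V|) e%:E)%E).
  by apply: lee_sum => k _; rewrite /G; case: insub => [i|]; rewrite ?measure0.
by rewrite sumEFin lee_fin sumr_const card_ord mulr_natl.
Qed.

Lemma probability_bigcap_gt0 d (T : measurableType d) (R : realType)
    (P : probability T R) (F : nat -> set T) :
  (forall k, measurable (F k)) ->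
  (forall k, (P (~` F k) <= (1 / (2 ^ (k + 2))%:R)%:E)%E) ->
  (0 < P (\bigcap_k F k))%E.
Proof.
move=> mF PFC_le; have mI : measurable (\bigcap_k F k) by exact: bigcapT_measurable.
have PIC_le : (P (~` \bigcap_k F k) <= (1 / 2)%:E)%E.
  rewrite setC_bigcap; apply: (@le_trans _ _ (\sum_(k <oo) P (~` F k))%E).
    apply: measure_sigma_subadditive => //; first by move=> k; exact: measurableC.
    by apply: bigcupT_measurable => k; exact: measurableC.
  apply: (@le_trans _ _ (\sum_(k <oo) ((1 / (2 ^ (k + 2))%:R)%:E))%E).
    by apply: lee_nneseries => k _; [move=> _; exact: measure_ge0 | exact: PFC_le].
  by rewrite -(cvg_lim (@ereal_hausdorff R) (@cvg_geometric_eseries_half R 1 1)).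
have PI_fin : P (\bigcap_k F k) \is a fin_num.
  by rewrite ge0_fin_numE // (le_lt_trans (probability_le1 _ mI)) ?ltey.
move: PIC_le; rewrite probability_setC // -(fineK PI_fin) -EFinB !lee_fin lte_fin.
lra.
Qed.

Section UniformProduct.
Context {R : realType} {c : nat} (P : probability (Sigma c) R).
Hypothesis P_uniform : is_uniform_product P.
Local Notation b := c.+2.
Local Notation T := (Sigma c).
Implicit Types (f u i j : nat -> 'I_b) (A G : set T).

Lemma P_prefix_set n f : P (prefix_set n f) = ((b%:R : R) ^- n)%:E.
Proof. by rewrite prefix_set_cylinder P_uniform. Qed.

Lemma P_scat_preimage L u (E : set T) : measurable E ->
  P (scat L u @^-1` E) = (((b%:R : R) ^+ L)%:E * P (E `&` prefix_set L u))%E.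
Proof.
move=> mE; have bL_ge0 : 0 <= (b%:R : R) ^+ L by rewrite exprn_ge0.
pose scaled := mscale (NngNum bL_ge0) (mrestr P (measurable_prefix_set L u)).
have := measure_unique _ _ measurable_cylinders0 cylinders0_setI_closed
  (fun=> cylinders0_setT) _ (pushforward P (scat L u : T -> T)) scaled.
apply=> //.
- by rewrite bigcup_const.
- exact: measurable_scat.
- move=> mf _ [[n [w ->]]|->]; last by rewrite !measure0.
  rewrite -[LHS]/(P (scat L u @^-1` _)).
  rewrite -[RHS]/(((b%:R ^+ L)%:E * P (_ `&` prefix_set L u))%E) cylinder_prefix_set.
  have [eq_uw|neq_uw] := pselect (forall k, (k < n)%N -> (k < L)%N -> u k = word_seq w k).
    rewrite scat_preimage_prefix_set // prefix_setI => [|k k_n k_L]; last by rewrite eq_uw.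
    by rewrite !P_prefix_set -EFinM maxnC maxnE exprD invfM mulrA mulfV ?mul1r.
  rewrite scat_preimage_prefix_set_eq0 // prefix_setI_eq0 ?measure0 ?mule0 //.
  by move=> eq_wu; apply: neq_uw => k k_n k_L; rewrite eq_wu.
- move=> mf _; rewrite -[X in (X < _)%E]/(P (scat L u @^-1` setT)).
  by rewrite preimage_setT probability_setT ltey.
Qed.

Lemma P_prefix_partition N (E : set T) : measurable E ->
  P E = (\sum_(w \in [set: {ffun 'I_N -> 'I_b}]) P (E `&` prefix_set N (word_seq w)))%E.
Proof.
move=> mE; rewrite -measure_fin_bigcup //.
- apply: f_equal; apply/seteqP; split => [j Ej|j [w _ []] //].
  exists [ffun k : 'I_N => j k] => //; split => // k k_lt.
  by rewrite word_seq_lt ffunE.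
- exact: finite_finset.
- move=> w1 w2 _ _ [j [[_ j_w1] [_ j_w2]]]; apply/ffunP => k.
  have := j_w1 k (ltn_ord k); have := j_w2 k (ltn_ord k).
  have k_eq : Ordinal (ltn_ord k) = k by apply: val_inj.
  by rewrite !(word_seq_lt _ _ (ltn_ord k)) k_eq => <- <-.
- by move=> w _; apply: measurableI => //; exact: measurable_prefix_set.
Qed.

Lemma P_gt0_two_points G : measurable G -> (0 < P G)%E ->
  exists i j, [/\ G i, G j & i <> j].
Proof.
move=> mG PG_gt0.
have [i Gi] : exists i, G i.
  apply: contrapT => G0; move: PG_gt0.
  by rewrite (_ : G = set0) ?measure0 ?ltxx //; apply/seteqP; split => // t Gt; apply: G0; exists t.
suff [j Gj neq_ji] : exists2 j, G j & j <> i by exists j, i.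
apply: contrapT => G_i; have PG_le n : (P G <= ((b%:R : R) ^- n)%:E)%E.
  rewrite -(P_prefix_set n i); apply: le_measure; rewrite ?inE //; first exact: measurable_prefix_set.
  move=> t Gt k _; have -> // : t = i.
  by apply: contrapT => neq_ti; apply: G_i; exists t.
have PG_fin : P G \is a fin_num by rewrite ge0_fin_numE // (le_lt_trans (PG_le 0%N)) ?ltey.
suff PG0 : fine (P G) = 0 by move: PG_gt0; rewrite -(fineK PG_fin) PG0 ltxx.
apply: (@norm_le_geometric_eq0 _ _ 1 (b%:R^-1)).
  by rewrite ger0_norm ?invr_ge0 ?ler0n // invf_lt1 ?ltr0n // ltr1n.
move=> n; rewrite ger0_norm ?fine_ge0 // mul1r exprVn -lee_fin fineK //.
Qed.

Section Density.
Variable A : set T.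
Hypothesis A_closed : seq_closed A.

Let mA : measurable A := measurable_seq_closed A A_closed.

Lemma P_prefix_nbhd_setD_cvg0 : (fun N => P (prefix_nbhd N A `\` A)) @ \oo --> 0%E.
Proof.
have mD N : measurable (prefix_nbhd N A `\` A).
  by apply: measurableD => //; exact: measurable_prefix_nbhd.
have D_cvg : (P \o (fun N => prefix_nbhd N A `\` A)) @ \oo -->
    P (\bigcap_N (prefix_nbhd N A `\` A)).
  apply: nonincreasing_cvg_mu => //.
  - by rewrite (le_lt_trans (probability_le1 _ (mD 0%N))) // ltey.
  - exact: bigcapT_measurable.
  - move=> m n m_le_n; apply/subsetPset => j [[j' Aj' j_j'] nAj]; split => //.
    by exists j' => // k k_lt; apply: j_j'; exact: leq_trans k_lt m_le_n.
rewrite (_ : \bigcap_N _ = set0) ?measure0 // in D_cvg.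
apply/seteqP; split => // j j_D; have [_ nAj] := j_D 0%N I.
by apply: nAj; apply: A_closed => N; have [] := j_D N I.
Qed.

Lemma P_prefix_nbhd_setD_ge e N : 0 <= e ->
  (forall f, ((e * b%:R ^- N)%:E <= P (prefix_set N f `\` A))%E) ->
  (e%:E * P A <= P (prefix_nbhd N A `\` A))%E.
Proof.
move=> e_ge0 cyl_ge; set U := prefix_nbhd N A.
have mU : measurable U := measurable_prefix_nbhd N A.
have mD : measurable (U `\` A) by exact: measurableD.
apply: (@le_trans _ _ (e%:E * P U)%E).
  by rewrite lee_wpmul2l ?lee_fin // le_measure ?inE // => j Aj; exists j.
rewrite (P_prefix_partition N U mU) (P_prefix_partition N _ mD) ge0_mule_fsumr; last first.
  by move=> w; exact: measure_ge0.
apply: lee_fsum; first exact: finite_finset.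
move=> w _; set C := prefix_set N _.
have [[j0 [Uj0 Cj0]]|UC0] := pselect (exists j, (U `&` C) j); last first.
  rewrite (_ : U `&` C = set0) ?measure0 ?mule0 //.
  by apply/seteqP; split => // j UCj; apply: UC0; exists j.
have CU : C `<=` U.
  move=> j Cj; case: Uj0 => j' Aj' j0_j'; exists j' => // k k_lt.
  by rewrite -j0_j' // Cj // Cj0.
rewrite (setIidr CU) (_ : (U `\` A) `&` C = C `\` A); last first.
  by apply/seteqP; split => [j [[_ nAj] Cj]|j [Cj nAj]] //; split => //; split => //; exact: CU.
by rewrite P_prefix_set -EFinM; exact: cyl_ge.
Qed.

Lemma density_prefix_set e : 0 < e -> (0 < P A)%E ->
  exists N f, (P (prefix_set N f `\` A) <= (e * b%:R ^- N)%:E)%E.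
Proof.
move=> e_gt0 PA_gt0; apply: contrapT => no_dense.
have P_ge N : (e%:E * P A <= P (prefix_nbhd N A `\` A))%E.
  apply: P_prefix_nbhd_setD_ge (ltW e_gt0) _ => f; rewrite leNgt; apply/negP => lt.
  by apply: no_dense; exists N, f; exact: ltW.
have : (e%:E * P A <= 0)%E.
  by apply: (cvge_to_ge P_prefix_nbhd_setD_cvg0); near=> N; exact: P_ge.
by rewrite leNgt mule_gt0 ?lte_fin.
Unshelve. all: by end_near.
Qed.

Definition good_tails N f k : set T := \bigcap_(v in [set: {ffun 'I_k -> 'I_b}])
  (scat (N + k) (scat N f (word_seq v)) @^-1` A).

Lemma measurable_good_tails N f k : measurable (good_tails N f k).
Proof.
apply: fin_bigcap_measurable; first exact: finite_finset.
by move=> v _; rewrite -[X in measurable X]setTI; exact: measurable_scat.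
Qed.

Lemma P_not_good_tails_le N f k e : 0 <= e ->
  (P (prefix_set N f `\` A) <= (e * b%:R ^- N)%:E)%E ->
  (P (~` good_tails N f k) <= (b%:R ^+ k * (b%:R ^+ k * e))%:E)%E.
Proof.
move=> e_ge0 dense; rewrite /good_tails setC_bigcap.
have card_words : #|{ffun 'I_k -> 'I_b}|%:R = (b%:R ^+ k : R).
  by rewrite card_ffun !card_ord natrX.
rewrite -[X in (_ <= (X * _)%:E)%E]card_words.
have := measure_bigcup_fintype_le P {ffun 'I_k -> 'I_b}
  (fun v => ~` (scat (N + k) (scat N f (word_seq v)) @^-1` A)) (b%:R ^+ k * e).
apply; first by rewrite mulr_ge0 ?exprn_ge0.
  move=> v; apply: measurableC; rewrite -[X in measurable X]setTI.
  exact: measurable_scat.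
move=> v; rewrite preimage_setC.
rewrite -[X in (X <= _)%E]/(P (scat (N + k) (scat N f (word_seq v)) @^-1` ~` A)).
rewrite P_scat_preimage; last exact: measurableC.
apply: (@le_trans _ _ ((b%:R ^+ (N + k))%:E * P (prefix_set N f `\` A))%E).
  rewrite lee_wpmul2l ?lee_fin ?exprn_ge0 // le_measure ?inE //.
  - by apply: measurableI; [exact: measurableC | exact: measurable_prefix_set].
  - by apply: measurableD => //; exact: measurable_prefix_set.
  move=> j [nAj j_v]; split => // l l_lt; rewrite j_v ?scat_lt //; lia.
apply: le_trans (lee_wpmul2l _ dense) _; first by rewrite lee_fin exprn_ge0.
rewrite -EFinM lee_fin exprD le_eqVlt; apply/orP; left; apply/eqP.
by field; rewrite expf_neq0 // pnatr_eq0.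
Qed.

Lemma two_good_tails : (0 < P A)%E ->
  exists i j, i <> j /\ forall k, exists N f, good_tails N f k i /\ good_tails N f k j.
Proof.
move=> PA_gt0.
(* Chosen so that P_not_good_tails_le bounds P (~` good_tails _ _ k) by 2^-(k+2). *)
pose eps k : R := 1 / (2 ^ (k + 2))%:R / (b%:R ^+ k * b%:R ^+ k).
have eps_gt0 k : 0 < eps k by rewrite divr_gt0 ?mulr_gt0 ?exprn_gt0.
have /choice[Nf dense] : forall k, exists p : nat * (nat -> 'I_b),
    (P (prefix_set p.1 p.2 `\` A) <= (eps k * b%:R ^- p.1)%:E)%E.
  by move=> k; have [N [f dense]] := density_prefix_set _ (eps_gt0 k) PA_gt0; exists (N, f).
pose G := \bigcap_k good_tails (Nf k).1 (Nf k).2 k.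
have mG : measurable G by apply: bigcapT_measurable => k; exact: measurable_good_tails.
have PG_gt0 : (0 < P G)%E.
  apply: probability_bigcap_gt0 => [k|k]; first exact: measurable_good_tails.
  apply: le_trans (P_not_good_tails_le _ _ _ _ (ltW (eps_gt0 k)) (dense k)) _.
  rewrite lee_fin le_eqVlt; apply/orP; left; apply/eqP.
  by rewrite /eps; field; rewrite expf_neq0 ?pnatr_eq0 // expn_eq0.
have [i [j [Gi Gj neq_ij]]] := P_gt0_two_points G mG PG_gt0.
by exists i, j; split => // k; exists (Nf k).1, (Nf k).2; split; [exact: Gi | exact: Gj].
Qed.

End Density.

End UniformProduct.

Lemma lipschitz_constant (R : realType) (f : R -> R) :
  lipschitz f -> exists2 M, 0 <= M & forall u v, `|f u - f v| <= M * `|u - v|.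
Proof.
move=> [M0 [_ f_lip]]; exists (`|M0| + 1); first by rewrite addr_ge0.
by move=> u v; apply: (f_lip _ _ (u, v)) => //; have := ler_norm M0; lra.
Qed.

Section NoAtoms.
Context {R : realType} {c : nat} {gamma : R} {phi : R -> R} {M : R}.
Hypothesis gamma_gt0 : 0 < gamma.
Hypothesis gamma_lt1 : gamma < 1.
Hypothesis M_ge0 : 0 <= M.
Hypothesis phi_lip : forall u v, `|phi u - phi v| <= M * `|u - v|.
Local Notation b := c.+2.
Local Notation S := (S b gamma phi).
Implicit Types (i j : nat -> 'I_b).

Let b_gt0 : (0 < b)%N. Proof. by []. Qed.

Lemma S_level_closed x y : 0 <= x <= 1 -> seq_closed [set j : Sigma c | S x j = y].
Proof.
move=> x_itv j j_nbhd; apply/eqP; rewrite -subr_eq0; apply/eqP.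
apply: (@norm_le_geometric_eq0 _ _ (2 * S_sup gamma phi M) gamma).
  by rewrite gtr0_norm.
move=> N; have [j' /= <- j_j'] := j_nbhd N.
exact: S_prefix_close.
Qed.

Lemma S_eq_on_01 x i j : 0 <= x <= 1 ->
  (forall k, exists N f, forall v : {ffun 'I_k -> 'I_b},
     S x (scat (N + k) (scat N f (word_seq v)) i) =
     S x (scat (N + k) (scat N f (word_seq v)) j)) ->
  forall z, 0 <= z <= 1 -> S z i = S z j.
Proof.
move=> x_itv S_eq z z_itv; apply/eqP; rewrite -subr_eq0; apply/eqP.
apply: (@norm_le_geometric_eq0 _ _ (2 * (M / (1 - gamma))) (b%:R^-1)).
  by rewrite ger0_norm ?invr_ge0 ?ler0n // invf_lt1 ?ltr0n // ltr1n.
move=> k; have [N [f S_eq_k]] := S_eq k.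
have [g near_g] := branch_dense b_gt0 _ _ k z_itv (branch_itv b_gt0 x N f x_itv).
pose v : {ffun 'I_k -> 'I_b} := [ffun l : 'I_k => g l].
pose p := branch x (N + k) (scat N f (word_seq v)).
have p_eq : p = branch (branch x N f) k g.
  rewrite /p branchD // sdrop_scat (eq_branch x N _ f); last by move=> l; exact: scat_lt.
  by apply: eq_branch => l l_lt; rewrite word_seq_lt ffunE.
have S_p : S p i = S p j.
  exact: (S_scat_eq b_gt0 gamma_gt0 gamma_lt1 M_ge0 phi_lip _ _ _ _ _ x_itv (S_eq_k v)).
have p_itv : 0 <= p <= 1 by apply: branch_itv.
have lip_i := S_lipschitz b_gt0 gamma_gt0 gamma_lt1 M_ge0 phi_lip z p i z_itv p_itv.
have lip_j := S_lipschitz b_gt0 gamma_gt0 gamma_lt1 M_ge0 phi_lip z p j z_itv p_itv.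
have : M / (1 - gamma) * `|z - p| <= M / (1 - gamma) * b%:R ^- k.
  by apply: ler_wpM2l; [rewrite divr_ge0 // subr_ge0 ltW | rewrite p_eq].
rewrite (_ : S z i - S z j = (S z i - S p i) - (S z j - S p j)); last by rewrite S_p; ring.
by rewrite exprVn; move: (ler_normB (S z i - S p i) (S z j - S p j)); lra.
Qed.

End NoAtoms.

Theorem lemma5p3 (R : realType) (c : nat) (gamma : R) (phi : R -> R)
  (P : probability (Sigma c) R) :
  0 < gamma < 1 ->
  periodic1 phi -> lipschitz phi -> condH c.+2 gamma phi ->
  is_uniform_product P ->
  forall x : R, 0 <= x <= 1 ->
    forall y : R, m_x c gamma phi P x [set y] = 0%E.
Proof.
move=> /andP[gamma_gt0 gamma_lt1] _ /lipschitz_constant[M M_ge0 phi_lip] condH_phi.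
move=> P_uniform x x_itv y; set A := [set j : Sigma c | S c.+2 gamma phi x j = y].
have A_closed : seq_closed A := S_level_closed gamma_gt0 gamma_lt1 M_ge0 phi_lip x y x_itv.
change (P A = 0%E); apply/eqP; rewrite eq_le measure_ge0 andbT leNgt.
apply/negP => /(two_good_tails P P_uniform A A_closed)[i [j [neq_ij good]]].
have [z z_itv] := condH_phi i j neq_ij; apply/negP; rewrite negbK subr_eq0.
apply/eqP; apply: (S_eq_on_01 gamma_gt0 gamma_lt1 M_ge0 phi_lip _ _ _ x_itv _ z z_itv) => k.
have [N [f [good_i good_j]]] := good k.
by exists N, f => v; rewrite (good_i v I) (good_j v I).
Qed.
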